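(* Consider Algorithm iR2N (described in the context) and suppose (A4) and (A6) hold. For each iteration $k$ with nonzero denominator, let $$\rho_k=\frac{f(x_k)+h(x_k)-f(x_k+s_k)-h(x_k+s_k)}{\varphi(0;x_k)+\psi(0;x_k)-\varphi(s_k;x_k)-\psi(s_k;x_k)},$$ and define $$\eta_1=\hat\eta_1-\frac{4\kappa_f\theta_1\theta_2^2}{(1-\theta_1)\sigma_{\min}},\qquad \eta_2=\hat\eta_2-\frac{4\kappa_f\theta_1\theta_2^2}{(1-\theta_1)\sigma_{\min}}.$$ Then $\eta_1>0$, $\eta_2>0$, and for every $k$: $\hat\rho_k\ge\hat\eta_1\Rightarrow\rho_k\ge\eta_1$, and $\hat\rho_k\ge\hat\eta_2\Rightarrow\rho_k\ge\eta_2$.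
   Context: Setting. $f:\mathbb{R}^n\to\mathbb{R}$ is continuously differentiable, $h:\mathbb{R}^n\to\mathbb{R}\cup\{+\infty\}$ is proper and lower semicontinuous; the problem is $\min_x f(x)+h(x)$. $\|\cdot\|$ is the Euclidean norm (spectral norm for matrices). For each $x$, approximations $\hat f(x)\in\mathbb{R}$ of $f(x)$ and $\hat\nabla f(x)\in\mathbb{R}^n$ of $\nabla f(x)$ are available. For each $x$, $\psi(\cdot;x):\mathbb{R}^n\to\mathbb{R}\cup\{+\infty\}$ is proper, lsc, satisfies $\psi(0;x)=h(x)$ and $\partial\psi(0;x)\subseteq\partial h(x)$ ($\partial$ = limiting subdifferential), and is uniformly prox-bounded: there is $\lambda>0$ such that for every $x$ and every $0<\lambda'<\lambda$, $w\mapsto\psi(w;x)+\tfrac{1}{2\lambda'}\|w\|^2$ is bounded below. Models: $\varphi_{\mathrm{cp}}(s;x)=\hat f(x)+\hat\nabla f(x)^Ts$; $m_{\mathrm{cp}}(s;x,\nu^{-1})=\varphi_{\mathrm{cp}}(s;x)+\tfrac12\nu^{-1}\|s\|^2+\psi(s;x)$; for a symmetric $B(x)\in\mathbb{R}^{n\times n}$, $\varphi(s;x)=\hat f(x)+\hat\nabla f(x)^Ts+\tfrac12 s^TB(x)s$ and $m(s;x,\sigma)=\varphi(s;x)+\tfrac12\sigma\|s\|^2+\psi(s;x)$. Algorithm iR2N. Constants: $\kappa_f,\kappa_\nabla>0$, $0<\gamma_3\le 1<\gamma_1\le\gamma_2$, $0<\hat\eta_1\le\hat\eta_2<1$, $0<\theta_1<1<\theta_2$,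 $\sigma_{\min}>4\kappa_f\theta_1\theta_2^2/(\hat\eta_1(1-\theta_1))$, $\sigma_0\ge\sigma_{\min}$, $x_0\in\mathbb{R}^n$. At iteration $k=0,1,\dots$: choose symmetric $B_k=B(x_k)$; set $\nu_k=\theta_1/(\|B_k\|+\sigma_k)$; compute $\hat s_{k,\mathrm{cp}}$ with $m_{\mathrm{cp}}(\hat s_{k,\mathrm{cp}};x_k,\nu_k^{-1})\le m_{\mathrm{cp}}(0;x_k,\nu_k^{-1})$ (an approximate minimizer of $m_{\mathrm{cp}}(\cdot;x_k,\nu_k^{-1})$ obtained by a descent procedure from $s=0$) and set $\hat\xi_{k,\mathrm{cp}}=(\varphi_{\mathrm{cp}}+\psi)(0;x_k)-(\varphi_{\mathrm{cp}}+\psi)(\hat s_{k,\mathrm{cp}};x_k)$; compute $s_k$ with $m(s_k;x_k,\sigma_k)\le m(\hat s_{k,\mathrm{cp}};x_k,\sigma_k)$; if $\|s_k\|>\theta_2\|\hat s_{k,\mathrm{cp}}\|$, reset $s_k=\hat s_{k,\mathrm{cp}}$ (these computations are repeated with refined $\hat f,\hat\nabla f$ until (A6) holds). Compute $$\hat\rho_k=\frac{\hat f(x_k)+h(x_k)-\hat f(x_k+s_k)-h(x_k+s_k)}{\varphi(0;x_k)+\psi(0;x_k)-\varphi(s_k;x_k)-\psi(s_k;x_k)},$$ where $\varphi(\cdot;x_k)$ uses $B_k$. If $\hat\rho_k\ge\hat\eta_1$ (successful) set $x_{k+1}=x_k+s_k$, else $x_{k+1}=x_k$. Choose $\sigma_{k+1}\in[\gamma_3\sigma_k,\sigma_k]$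 if $\hat\rho_k\ge\hat\eta_2$ (very successful), $\sigma_{k+1}\in[\sigma_k,\gamma_1\sigma_k]$ if $\hat\eta_1\le\hat\rho_k<\hat\eta_2$, $\sigma_{k+1}\in[\gamma_1\sigma_k,\gamma_2\sigma_k]$ if $\hat\rho_k<\hat\eta_1$; then reset $\sigma_{k+1}=\max(\sigma_{k+1},\sigma_{\min})$. Assumptions. (A4) For all $k$, $\varphi(0;x_k)+\psi(0;x_k)-(\varphi(s_k;x_k)+\psi(s_k;x_k))\ge(1-\theta_1)\hat\xi_{k,\mathrm{cp}}$. (A6) For all $k$: $|f(x_k)-\hat f(x_k)|\le\kappa_f\|s_k\|^2$, $|f(x_k+s_k)-\hat f(x_k+s_k)|\le\kappa_f\|s_k\|^2$, $\|\nabla f(x_k)-\hat\nabla f(x_k)\|\le\kappa_\nabla\|s_k\|$. *)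

From HB Require Import structures.
From mathcomp Require Import all_boot all_order all_algebra.
From mathcomp Require Import all_classical all_reals all_analysis.
Set Implicit Arguments. Unset Strict Implicit. Unset Printing Implicit Defensive.
Import Order.TTheory GRing.Theory Num.Theory.
Import numFieldNormedType.Exports.
Local Open Scope classical_set_scope.
Local Open Scope ring_scope.

Section Defs.
Variables (R : realType) (n : nat).
Local Notation vec := 'cV[R]_n.

Definition dot (u v : vec) : R := \sum_(i < n) u i ord0 * v i ord0.
Definition enorm (u : vec) : R := Num.sqrt (dot u u).

Definition opnorm (B : 'M[R]_n) : R :=
  sup [set r | exists u : vec, enorm u <= 1 /\ r = enorm (B *m u)].

Definition symmetric_mx (B : 'M[R]_n) : Prop := B^T = B.

Definition C1_with_grad (f : vec -> R) (g : vec -> vec) : Prop :=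
  (forall x, differentiable f x) /\
  (forall x v, 'd f x v = dot (g x) v) /\ continuous g.

Definition proper_fun (h : vec -> \bar R) : Prop :=
  (forall x, h x != -oo%E) /\ (exists x, h x != +oo%E).

Definition lsc_fun (h : vec -> \bar R) : Prop :=
  forall x (a : R), (a%:E < h x)%E -> \forall y \near x, (a%:E < h y)%E.

Definition frechet_subdiff (h : vec -> \bar R) (x : vec) : set vec :=
  [set v | (exists r : R, h x = r%:E) /\
     forall eps : R, 0 < eps -> exists2 del : R, 0 < del &
       forall y, enorm (y - x) < del ->
         (h x + (dot v (y - x) - eps * enorm (y - x))%:E <= h y)%E].

Definition limiting_subdiff (h : vec -> \bar R) (x : vec) : set vec :=
  [set v | exists (xs vs : nat -> vec),
     xs @ \oo --> x /\ (h \o xs) @ \oo --> h x /\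
     (forall k, frechet_subdiff h (xs k) (vs k)) /\ vs @ \oo --> v].

(* uniform prox-boundedness of the family psi(. ; x) (psi x w = psi(w;x)) *)
Definition unif_prox_bounded (psi : vec -> vec -> \bar R) : Prop :=
  exists2 lam : R, 0 < lam & forall x (lam' : R), 0 < lam' < lam ->
    exists c : R, forall w,
      (c%:E <= psi x w + ((2 * lam')^-1 * enorm w ^+ 2)%:E)%E.

(* Models (fh = \hat f(x), gh = \hat\nabla f(x)). *)
Definition phi_cp (fh : R) (gh : vec) (s : vec) : R := fh + dot gh s.
Definition phi_q (fh : R) (gh : vec) (B : 'M[R]_n) (s : vec) : R :=
  fh + dot gh s + 2^-1 * dot s (B *m s).
Definition m_cp (fh : R) (gh : vec) (psix : vec -> \bar R) (nuinv : R)
  (s : vec) : \bar R :=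
  ((phi_cp fh gh s + 2^-1 * nuinv * enorm s ^+ 2)%:E + psix s)%E.
Definition m_q (fh : R) (gh : vec) (B : 'M[R]_n) (psix : vec -> \bar R)
  (sigma : R) (s : vec) : \bar R :=
  ((phi_q fh gh B s + 2^-1 * sigma * enorm s ^+ 2)%:E + psix s)%E.

End Defs.

(** Both ratios share the denominator [d], the decrease of the model, and
    their numerators differ only by the errors of [\hat f] at [x_k] and
    [x_k + s_k], which (A6) bounds by [2 kappa_f |s_k|^2].  The Cauchy
    point decreases [m_cp], so [xi_cp >= nu_k^-1 |s_cp|^2 / 2 >=
    sigma_min |s_cp|^2 / (2 theta_1)]; with (A4) and [|s_k| <= theta_2 |s_cp|]
    this gives [d >= (1 - theta_1) sigma_min |s_k|^2 / (2 theta_1 theta_2^2) > 0].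
    Hence [|rho_k - \hat rho_k| <= 4 kappa_f theta_1 theta_2^2 /
    ((1 - theta_1) sigma_min)], which is less than [\hat eta_1] by the choice
    of [sigma_min]. *)
From HB Require Import structures.
From mathcomp Require Import all_boot all_order all_algebra.
From mathcomp Require Import all_classical all_reals all_analysis.
From mathcomp Require Import ring lra.
Import Order.TTheory GRing.Theory Num.Theory.
Import numFieldNormedType.Exports.
Local Open Scope classical_set_scope.
Local Open Scope ring_scope.

Section Norms.
Context {R : realType} {n : nat}.

Lemma enorm0 : enorm (0 : 'cV[R]_n) = 0.
Proof. by rewrite /enorm /dot big1 ?sqrtr0 // => i _; rewrite mxE mul0r. Qed.

Lemma enorm_ge0 (u : 'cV[R]_n) : 0 <= enorm u.
Proof. exact: sqrtr_ge0. Qed.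

Lemma opnorm_ge0 (B : 'M[R]_n) : 0 <= opnorm B.
Proof.
rewrite /opnorm; set E := [set _ | _].
have E0 : E 0 by exists 0; rewrite enorm0 mulmx0 enorm0.
have [ub|nub] := pselect (has_ubound E); first exact: ub_le_sup ub _ E0.
by rewrite sup_out // => -[].
Qed.

Lemma enorm_capped_step (t : R) (r c : 'cV[R]_n) : 1 <= t ->
  enorm (if enorm r > t * enorm c then c else r) <= t * enorm c.
Proof.
move=> t1; case: ifP => [_|/negbT]; last by rewrite -leNgt.
by rewrite ler_peMl // enorm_ge0.
Qed.

End Norms.

Section RealInequalities.
Context {R : realType}.

Lemma sq_step_le_decrease {t1 t2 smin nuinv sc ss d : R} :
  0 < t1 < 1 -> 0 < smin -> smin <= t1 * nuinv -> 0 <= ss <= t2 * sc ->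
  (1 - t1) * (2^-1 * nuinv * sc ^+ 2) <= d ->
  (1 - t1) * smin * ss ^+ 2 <= 2 * t1 * t2 ^+ 2 * d.
Proof.
move=> /andP[t10 t11] smin0 smin_nu /andP[ss0 ss_sc] dec.
have sq : ss ^+ 2 <= t2 ^+ 2 * sc ^+ 2 by rewrite -exprMn ler_pXn2r ?nnegrE //; lra.
have nu_sc : smin * sc ^+ 2 <= t1 * nuinv * sc ^+ 2 by rewrite ler_wpM2r ?sqr_ge0.
have c1 : 0 <= (1 - t1) * smin by apply: mulr_ge0; lra.
have c2 : 0 <= (1 - t1) * t2 ^+ 2 by apply: mulr_ge0; [lra | exact: sqr_ge0].
have c3 : 0 <= 2 * t1 * t2 ^+ 2 by apply: mulr_ge0; [lra | exact: sqr_ge0].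
apply: le_trans (ler_wpM2l c1 sq) _.
have -> : (1 - t1) * smin * (t2 ^+ 2 * sc ^+ 2) = (1 - t1) * t2 ^+ 2 * (smin * sc ^+ 2).
  by ring.
apply: le_trans (ler_wpM2l c2 nu_sc) _.
have -> : (1 - t1) * t2 ^+ 2 * (t1 * nuinv * sc ^+ 2) =
          2 * t1 * t2 ^+ 2 * ((1 - t1) * (2^-1 * nuinv * sc ^+ 2)) by field.
by rewrite ler_wpM2l.
Qed.

Lemma ratio_shift_ge {N del c eta d : R} : 0 < d -> `|del| <= c * d ->
  eta <= N / d -> eta - c <= (N + del) / d.
Proof.
move=> d0 del_c etaN; have : - c <= del / d.
  by rewrite lerNl -mulNr ler_pdivrMr // (le_trans _ del_c) // -normrN ler_norm.
by rewrite mulrDl; lra.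
Qed.

Lemma model_error_le {kf t1 t2 smin ss d e1 e2 : R} :
  0 < kf -> 0 < t1 < 1 -> 0 < smin ->
  `|e1| <= kf * ss ^+ 2 -> `|e2| <= kf * ss ^+ 2 ->
  (1 - t1) * smin * ss ^+ 2 <= 2 * t1 * t2 ^+ 2 * d ->
  `|e1 - e2| <= 4 * kf * t1 * t2 ^+ 2 / ((1 - t1) * smin) * d.
Proof.
move=> kf0 /andP[t10 t11] smin0 e1le e2le sq.
have den0 : 0 < (1 - t1) * smin by apply: mulr_gt0; lra.
apply: le_trans (ler_normB _ _) _.
rewrite mulrAC ler_pdivlMr //; apply: le_trans (_ : 2 * kf * ss ^+ 2 * ((1 - t1) * smin) <= _).
  by rewrite ler_wpM2r ?(ltW den0) //; lra.
have -> : 4 * kf * t1 * t2 ^+ 2 * d = 2 * kf * (2 * t1 * t2 ^+ 2 * d) by ring.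
have -> : 2 * kf * ss ^+ 2 * ((1 - t1) * smin) = 2 * kf * ((1 - t1) * smin * ss ^+ 2).
  by ring.
by rewrite ler_wpM2l //; apply: mulr_ge0; lra.
Qed.

(* The statement holds for every [p e : \bar R]: whenever the sum is not
   finite, it is [-oo] on both sides or [+oo] on the right-hand side. *)
Lemma ereal_ratio_shift_ge {a b a' b' c eta d : R} {p e : \bar R} : 0 < d ->
  `|(a - a') - (b - b')| <= c * d ->
  (eta%:E <= (a'%:E + p - b'%:E - e) * (d^-1)%:E)%E ->
  ((eta - c)%:E <= (a%:E + p - b%:E - e) * (d^-1)%:E)%E.
Proof.
move=> d0 err; have dV0 : (0 < (d^-1)%:E)%E by rewrite lte_fin invr_gt0.
case: p => [p| |]; case: e => [e| |] //=.
- rewrite -!EFinD -!EFinM !lee_fin => ineq.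
  have -> : a + p - b - e = (a' + p - b' - e) + ((a - a') - (b - b')) by ring.
  exact: ratio_shift_ge ineq.
all: by rewrite ?addeNy ?addNye ?addye ?addey //= ?gt0_mulye ?gt0_mulNye ?leey ?leeNy_eq.
Qed.

Lemma error_coef_lt {kf t1 t2 eta smin : R} :
  0 < kf -> 0 < t1 < 1 -> 0 < t2 -> 0 < eta ->
  4 * kf * t1 * t2 ^+ 2 / (eta * (1 - t1)) < smin ->
  0 < smin /\ 4 * kf * t1 * t2 ^+ 2 / ((1 - t1) * smin) < eta.
Proof.
move=> kf0 /andP[t10 t11] t20 eta0 smin_gt.
have num0 : 0 < 4 * kf * t1 * t2 ^+ 2 by rewrite !mulr_gt0 ?exprn_gt0.
have den0 : 0 < eta * (1 - t1) by apply: mulr_gt0; lra.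
have smin0 : 0 < smin by apply: lt_trans smin_gt; rewrite divr_gt0.
split => //; rewrite ltr_pdivrMr ?mulr_gt0 //; last lra.
rewrite ltr_pdivrMr // in smin_gt.
by have -> : eta * ((1 - t1) * smin) = smin * (eta * (1 - t1)) by ring.
Qed.

End RealInequalities.

Section ModelDecrease.
Context {R : realType} {n : nat}.
Local Notation vec := 'cV[R]_n.
Context {fh : R} {gh : vec} {psix : vec -> \bar R}.

Lemma m_cp_decrease_ge (nuinv : R) (sc : vec) :
  psix 0 \is a fin_num -> psix sc != -oo%E ->
  (m_cp fh gh psix nuinv sc <= m_cp fh gh psix nuinv 0)%E ->
  ((2^-1 * nuinv * enorm sc ^+ 2)%:E
     <= (phi_cp fh gh 0)%:E + psix 0 - ((phi_cp fh gh sc)%:E + psix sc))%E.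
Proof.
rewrite /m_cp enorm0 expr0n mulr0 addr0.
case: (psix 0) => [p0| |] // _; case: (psix sc) => [pc| |] // _.
by rewrite /= -!EFinD !lee_fin; lra.
Qed.

Lemma model_decrease_ge {B : 'M[R]_n} {t1 t2 smin sig d : R} {scp s : vec} :
  0 < t1 < 1 -> 0 < smin <= sig -> enorm s <= t2 * enorm scp ->
  psix scp != -oo%E ->
  (m_cp fh gh psix (t1 / (opnorm B + sig))^-1 scp
     <= m_cp fh gh psix (t1 / (opnorm B + sig))^-1 0)%E ->
  ((1 - t1)%:E * ((phi_cp fh gh 0)%:E + psix 0 - ((phi_cp fh gh scp)%:E + psix scp))
     <= (phi_q fh gh B 0)%:E + psix 0 - ((phi_q fh gh B s)%:E + psix s))%E ->
  ((phi_q fh gh B 0)%:E + psix 0 - (phi_q fh gh B s)%:E - psix s = d%:E)%E ->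
  d != 0 ->
  0 < d /\ (1 - t1) * smin * enorm s ^+ 2 <= 2 * t1 * t2 ^+ 2 * d.
Proof.
move=> t1_01 /andP[smin0 smin_sig] s_le psi_scp cp_dec A4 den d0.
have /andP[t10 t11] := t1_01.
have psi0 : psix 0 \is a fin_num by move: den; case: (psix 0); case: (psix s).
set nuinv := (t1 / (opnorm B + sig))^-1 in cp_dec.
have dec : (1 - t1) * (2^-1 * nuinv * enorm scp ^+ 2) <= d.
  rewrite -lee_fin -den EFinM -addeA -oppeD //.
  apply: le_trans A4; apply: lee_wpmul2l; first by rewrite lee_fin; lra.
  exact: m_cp_decrease_ge.
have smin_nu : smin <= t1 * nuinv.
  rewrite /nuinv invf_div mulrCA divff ?gt_eqF // mulr1.
  by rewrite ler_wpDl // opnorm_ge0.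
have nu0 : 0 <= nuinv by rewrite invr_ge0 divr_ge0 ?addr_ge0 ?opnorm_ge0 //; lra.
split.
  rewrite lt_def d0 /=; apply: le_trans dec; apply: mulr_ge0; first lra.
  by apply: mulr_ge0; [apply: mulr_ge0 | exact: sqr_ge0].
by apply: sq_step_le_decrease dec; rewrite ?t1_01 ?enorm_ge0.
Qed.

End ModelDecrease.

Theorem lemma3p4 (R : realType) (n : nat)
  (* problem data *)
  (f : 'cV[R]_n -> R) (gradf : 'cV[R]_n -> 'cV[R]_n)
  (h : 'cV[R]_n -> \bar R)
  (psi : 'cV[R]_n -> 'cV[R]_n -> \bar R)       (* psi x s = psi(s; x) *)
  (B : 'cV[R]_n -> 'M[R]_n)
  (* approximations \hat f, \hat\nabla f in force at iteration k *)
  (fhat : nat -> 'cV[R]_n -> R) (ghat : nat -> 'cV[R]_n -> 'cV[R]_n)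
  (* constants *)
  (kappa_f kappa_g gamma1 gamma2 gamma3 eta1h eta2h theta1 theta2
   sigma_min sigma0 : R) (x0 : 'cV[R]_n)
  (* iterates *)
  (x s scp sraw : nat -> 'cV[R]_n) (sigma : nat -> R) :
  C1_with_grad f gradf ->
  proper_fun h -> lsc_fun h ->
  (forall y, proper_fun (psi y) /\ lsc_fun (psi y) /\ psi y 0 = h y /\
     limiting_subdiff (psi y) 0 `<=` limiting_subdiff h y) ->
  unif_prox_bounded psi ->
  (forall y, symmetric_mx (B y)) ->
  0 < kappa_f -> 0 < kappa_g ->
  0 < gamma3 <= 1 -> 1 < gamma1 <= gamma2 ->
  0 < eta1h <= eta2h -> eta2h < 1 ->
  0 < theta1 < 1 -> 1 < theta2 ->
  4 * kappa_f * theta1 * theta2 ^+ 2 / (eta1h * (1 - theta1)) < sigma_min ->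
  sigma_min <= sigma0 ->
  (* the iteration *)
  x 0 = x0 -> sigma 0 = sigma0 ->
  (forall k,
     let xk := x k in let fh := fhat k xk in let gh := ghat k xk in
     let Bk := B xk in let nuk := theta1 / (opnorm Bk + sigma k) in
     let den := ((phi_q fh gh Bk 0%R)%:E + psi xk 0%R
                  - (phi_q fh gh Bk (s k))%:E - psi xk (s k))%E in
     let numh := ((fhat k xk)%:E + h xk
                  - (fhat k (xk + s k)%R)%:E - h (xk + s k)%R)%E in
     (m_cp fh gh (psi xk) nuk^-1 (scp k) <= m_cp fh gh (psi xk) nuk^-1 0)%E /\
     (m_q fh gh Bk (psi xk) (sigma k) (sraw k)
        <= m_q fh gh Bk (psi xk) (sigma k) (scp k))%E /\
     s k = (if enorm (sraw k) > theta2 * enorm (scp k) then scp k else sraw k) /\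
     (exists tau : R, sigma k.+1 = Num.max tau sigma_min /\
       forall d : R, den = d%:E -> d != 0 ->
         let rhoh := (numh * (d^-1)%:E)%E in
         (x k.+1 = (if (eta1h%:E <= rhoh)%E then xk + s k else xk)) /\
         ((eta2h%:E <= rhoh)%E -> gamma3 * sigma k <= tau <= sigma k) /\
         ((eta1h%:E <= rhoh)%E -> (rhoh < eta2h%:E)%E ->
             sigma k <= tau <= gamma1 * sigma k) /\
         ((rhoh < eta1h%:E)%E -> gamma1 * sigma k <= tau <= gamma2 * sigma k))) ->
  (* (A4) *)
  (forall k,
     let xk := x k in let fh := fhat k xk in let gh := ghat k xk in
     let Bk := B xk in
     let xicp := ((phi_cp fh gh 0%R)%:E + psi xk 0%R
                  - ((phi_cp fh gh (scp k))%:E + psi xk (scp k)))%E in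
     (((1 - theta1)%:E * xicp)
        <= (phi_q fh gh Bk 0%R)%:E + psi xk 0%R
           - ((phi_q fh gh Bk (s k))%:E + psi xk (s k)))%E) ->
  (* (A6) *)
  (forall k,
     `|f (x k) - fhat k (x k)| <= kappa_f * enorm (s k) ^+ 2 /\
     `|f (x k + s k) - fhat k (x k + s k)| <= kappa_f * enorm (s k) ^+ 2 /\
     enorm (gradf (x k) - ghat k (x k)) <= kappa_g * enorm (s k)) ->
  let c := 4 * kappa_f * theta1 * theta2 ^+ 2 / ((1 - theta1) * sigma_min) in
  let eta1 := eta1h - c in let eta2 := eta2h - c in
  0 < eta1 /\ 0 < eta2 /\
  (forall k (d : R),
     let xk := x k in let fh := fhat k xk in let gh := ghat k xk in
     let Bk := B xk in
     ((phi_q fh gh Bk 0%R)%:E + psi xk 0%R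
        - (phi_q fh gh Bk (s k))%:E - psi xk (s k))%E = d%:E -> d != 0 ->
     let rhoh := (((fhat k xk)%:E + h xk - (fhat k (xk + s k)%R)%:E
                   - h (xk + s k)%R) * (d^-1)%:E)%E in
     let rho := (((f xk)%:E + h xk - (f (xk + s k)%R)%:E
                   - h (xk + s k)%R) * (d^-1)%:E)%E in
     ((eta1h%:E <= rhoh)%E -> (eta1%:E <= rho)%E) /\
     ((eta2h%:E <= rhoh)%E -> (eta2%:E <= rho)%E)).
Proof.
move=> _ _ _ psi_h _ _ kf0 _ _ _ /andP[eta1h0 eta12] _ t1 t2 smin_gt sig0_ge _ sig0
  iter A4 A6 c eta1 eta2.
have [smin0 c_lt] := error_coef_lt kf0 t1 (lt_trans ltr01 t2) eta1h0 smin_gt.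
have sig_ge k : sigma_min <= sigma k.
  case: k => [|k]; first by rewrite sig0.
  by have [_ [_ [_ [tau [-> _]]]]] := iter k; rewrite le_max lexx orbT.
split; first by rewrite /eta1 subr_gt0.
split; first by rewrite /eta2 subr_gt0 (lt_le_trans c_lt).
move=> k d xk fh gh Bk den d0 rhoh rho.
have [cp_dec [_ [s_def _]]] := iter k.
have [errx [errxs _]] := A6 k.
have [[psi_ninf _] _] := psi_h xk.
have s_le : enorm (s k) <= theta2 * enorm (scp k).
  by rewrite s_def enorm_capped_step // ltW.
have smin_sig : 0 < sigma_min <= sigma k by rewrite smin0 sig_ge.
have [d_gt0 step_sq] :=
  model_decrease_ge t1 smin_sig s_le (psi_ninf (scp k)) cp_dec (A4 k) den d0.
have err := model_error_le kf0 t1 smin0 errx errxs step_sq.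
rewrite /rhoh /rho /eta1 /eta2 /xk.
by split; apply: ereal_ratio_shift_ge d_gt0 err.
Qed.
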